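(* Let $\mu>0$, let $a\in\left(-\frac{2\mu}{9},0\right)\cup\left(0,\frac{4\mu}{9}\right)$ be real and let $s_1\in\left[\frac{2\mu}{3},\infty\right)$. Define $$H(\tilde z;s_1,a)=\frac{27a^2\tilde z\,(2s_1-3a)}{27a^3\tilde z-27a^2\tilde z\,s_1-(\tilde z-1)^2s_1^3},\qquad \beta_1(a,s_1)=\frac{27a^2}{s_1^3}(3a-2s_1),$$ and $F(\tilde z;s_1,a)=H(\tilde z;s_1,a)/\beta_1(a,s_1)$. Then $F(\cdot\,;s_1,a)$ is a schlicht function on the unit disc, i.e. it is holomorphic and injective on $\{|\tilde z|<1\}$ with $F(0)=0$ and $F'(0)=1$; equivalently, $H(\cdot\,;s_1,a)$ is univalent on the unit disc $|\tilde z|<1$.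
   Context: A function is univalent on a domain if it is holomorphic and injective there. A schlicht function is a univalent function $f$ on the open unit disc with $f(0)=0$ and $f'(0)=1$. *)

From Stdlib Require Import Reals.
From Coquelicot Require Import Coquelicot.
Open Scope R_scope.

Definition unit_disc (z : C) : Prop := Cmod z < 1.

Definition holomorphic_on (D : C -> Prop) (f : C -> C) : Prop :=
  forall z, D z -> @ex_derive C_AbsRing C_NormedModule f z.

Definition univalent_on (D : C -> Prop) (f : C -> C) : Prop :=
  holomorphic_on D f /\ (forall z w, D z -> D w -> f z = f w -> z = w).

Definition schlicht (f : C -> C) : Prop :=
  univalent_on unit_disc f /\ f (RtoC 0) = RtoC 0 /\
  @is_derive C_AbsRing C_NormedModule f (RtoC 0) (RtoC 1).

Definition H (s1 a : R) (z : C) : C :=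
  (RtoC (27 * a ^ 2 * (2 * s1 - 3 * a)) * z /
   (RtoC (27 * a ^ 3) * z - RtoC (27 * a ^ 2 * s1) * z
    - (z - RtoC 1) * (z - RtoC 1) * RtoC (s1 ^ 3)))%C.

Definition beta1 (a s1 : R) : R := 27 * a ^ 2 / s1 ^ 3 * (3 * a - 2 * s1).

Definition F (s1 a : R) (z : C) : C := (H s1 a z / RtoC (beta1 a s1))%C.

(* With c := 1 + 27 a^2 (a - s1) / (2 s1^3), the denominator of H is
   -s1^3 (1 - 2 c z + z^2), so H = beta1 * z / (1 - 2 c z + z^2) and F is the
   classical function z / (1 - 2 c z + z^2), which for c = cos t has its two
   poles exp(+-i t) on the unit circle (c = 1 gives the Koebe function).  It is
   univalent in the disc because z q(w) - w q(z) = (z - w)(1 - z w) for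
   q(z) = 1 - 2 c z + z^2.  The hypotheses on mu only serve to give
   -s1/3 < a < 2 s1/3 with a <> 0, which yields -1 < c < 1 and beta1 <> 0,
   via 4 s1^3 + 27 a^2 (a - s1) = (3 a + s1) (3 a - 2 s1)^2. *)

From Stdlib Require Import Reals Lra Classical FunctionalExtensionality.
From Coquelicot Require Import Coquelicot.
Open Scope R_scope.

(* Coquelicot's product rule lives in [AbsRing_NormedModule C_AbsRing], a normed
   module structure on [C] that is equivalent to, but not convertible with, the
   [C_NormedModule] used in the definitions. *)
Notation is_derive_C f z l :=
  (@is_derive C_AbsRing (AbsRing_NormedModule C_AbsRing) f z l).

Lemma is_derive_C_NormedModule (f : C -> C) (z l : C) :
  is_derive_C f z l <-> @is_derive C_AbsRing C_NormedModule f z l.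
Proof.
  split; intros [_ Hd]; split;
    [apply is_linear_scal_l | exact Hd | apply is_linear_scal_l | exact Hd].
Qed.

Lemma Cmult_comm_AbsRing (u v : C_AbsRing) : mult u v = mult v u.
Proof. apply Cmult_comm. Qed.

Lemma RtoC_neq0 (r : R) : r <> 0 -> RtoC r <> RtoC 0.
Proof. intros Hr E. apply Hr, RtoC_inj, E. Qed.

Lemma Cinv_0 : (/ RtoC 0)%C = RtoC 0.
Proof. apply injective_projections; simpl; unfold Rdiv; ring. Qed.

Lemma Cinv_mult_RtoC (r : R) (q : C) :
  r <> 0 -> (/ (RtoC r * q))%C = (/ RtoC r * / q)%C.
Proof.
  intros Hr. destruct (classic (q = RtoC 0)) as [-> | Hq].
  - rewrite !Cmult_0_r, Cinv_0, Cmult_0_r. reflexivity.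
  - field. split; [exact Hq | exact (RtoC_neq0 r Hr)].
Qed.

Lemma Cmod_lower_bound (z y : C) :
  Cmod (y - z) < Cmod z / 2 -> Cmod z / 2 < Cmod y.
Proof.
  intros Hyz.
  assert (Htri := Cmod_triangle y (z - y)).
  replace (y + (z - y))%C with z in Htri by ring.
  replace (z - y)%C with (- (y - z))%C in Htri by ring.
  rewrite Cmod_opp in Htri. lra.
Qed.

Lemma Cmod_lt_1_sqr (z : C) : Cmod z < 1 -> Re z ^ 2 + Im z ^ 2 < 1.
Proof. intros Hz. rewrite <- Cmod2_alt. pose proof (Cmod_ge_0 z). nra. Qed.

Lemma is_derive_Cinv (z : C) :
  z <> RtoC 0 -> is_derive_C Cinv z (- / (z * z))%C.
Proof.
  intros Hz.
  split; [apply is_linear_scal_l|].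
  intros x Hx eps.
  apply (@is_filter_lim_locally_unique C_AbsRing (AbsRing_NormedModule C_AbsRing))
    in Hx; subst x.
  set (r := Cmod z).
  assert (Hr : 0 < r) by (apply Cmod_gt_0; exact Hz).
  assert (Hdelta : 0 < Rmin (r / 2) (eps * r ^ 3 / 2)).
  { pose proof (cond_pos eps). apply Rmin_case; [lra|].
    assert (0 < r ^ 3) by (apply pow_lt; lra). nra. }
  exists (mkposreal _ Hdelta). intros y Hy.
  change (Cmod (y - z) < Rmin (r / 2) (eps * r ^ 3 / 2)) in Hy.
  change (Cmod (/ y - / z - (y - z) * (- / (z * z))) <= eps * Cmod (y - z)).
  set (d := Cmod (y - z)) in *.
  assert (Hd1 : d < r / 2) by (eapply Rlt_le_trans; [exact Hy | apply Rmin_l]).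
  assert (Hd2 : d < eps * r ^ 3 / 2) by (eapply Rlt_le_trans; [exact Hy | apply Rmin_r]).
  assert (Hyr : r / 2 < Cmod y) by (apply Cmod_lower_bound; exact Hd1).
  assert (Hy0 : y <> RtoC 0) by (intros ->; rewrite Cmod_0 in Hyr; lra).
  replace (/ y - / z - (y - z) * (- / (z * z)))%C
    with ((y - z) * (y - z) / (y * (z * z)))%C by (field; auto).
  rewrite Cmod_div by (repeat apply Cmult_neq_0; auto).
  rewrite !Cmod_mult. fold d r.
  assert (0 <= d) by apply Cmod_ge_0.
  pose proof (cond_pos eps).
  apply Rle_div_l; [apply Rmult_lt_0_compat; nra|].
  assert (d * d <= d * (eps * (r / 2 * (r * r)))) by (simpl in Hd2; nra).
  assert (eps * (r / 2 * (r * r)) <= eps * (Cmod y * (r * r))) by nra.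
  nra.
Qed.

Lemma is_derive_Cdiv (f g : C -> C) (z f' g' : C) :
  is_derive_C f z f' -> is_derive_C g z g' -> g z <> RtoC 0 ->
  is_derive_C (fun t => f t / g t)%C z ((f' * g z - f z * g') / (g z * g z))%C.
Proof.
  intros Hf Hg Hgz.
  pose proof (is_derive_comp _ _ _ _ _ (is_derive_Cinv _ Hgz) Hg) as Hinv.
  pose proof (is_derive_mult _ _ _ _ _ Hf Hinv Cmult_comm_AbsRing) as Hfg.
  replace ((f' * g z - f z * g') / (g z * g z))%C
    with (f' * / g z + f z * (g' * - / (g z * g z)))%C; [exact Hfg|].
  field. exact Hgz.
Qed.

Lemma univalent_on_mult_const (D : C -> Prop) (f : C -> C) (k : C) :
  k <> RtoC 0 -> univalent_on D f -> univalent_on D (fun z => f z * k)%C.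
Proof.
  intros Hk [Hhol Hinj]. split.
  - intros z Hz. destruct (Hhol z Hz) as [l Hl]. exists (l * k)%C.
    apply is_derive_C_NormedModule in Hl.
    exact (is_derive_scal_l (V := C_NormedModule) f z l k Hl).
  - intros z w Hz Hw Hzw. apply Hinj; [exact Hz | exact Hw |].
    replace (f z) with (f z * k / k)%C by (field; exact Hk).
    rewrite Hzw. field. exact Hk.
Qed.

Definition koebe_cos_den (c : R) (z : C) : C := (1 - RtoC (2 * c) * z + z * z)%C.

Definition koebe_cos (c : R) (z : C) : C := (z / koebe_cos_den c z)%C.

Lemma is_derive_koebe_cos_den (c : R) (z : C) :
  is_derive_C (koebe_cos_den c) z (- RtoC (2 * c) + 2 * z)%C.
Proof.
  pose proof (is_derive_id (K := C_AbsRing) z) as Hid.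
  pose proof (is_derive_const (K := C_AbsRing)
                (V := AbsRing_NormedModule C_AbsRing) (RtoC 1) z) as H1.
  pose proof (is_derive_const (K := C_AbsRing)
                (V := AbsRing_NormedModule C_AbsRing) (RtoC (2 * c)) z) as Hc.
  pose proof (is_derive_mult _ _ _ _ _ Hc Hid Cmult_comm_AbsRing) as Hcz.
  pose proof (is_derive_mult _ _ _ _ _ Hid Hid Cmult_comm_AbsRing) as Hzz.
  pose proof (is_derive_plus _ _ _ _ _ (is_derive_minus _ _ _ _ _ H1 Hcz) Hzz) as Hq.
  replace (- RtoC (2 * c) + 2 * z)%C
    with (0 - (0 * z + RtoC (2 * c) * 1) + (1 * z + z * 1))%C; [exact Hq | ring].
Qed.

Lemma is_derive_koebe_cos (c : R) (z : C) :
  koebe_cos_den c z <> RtoC 0 ->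
  is_derive_C (koebe_cos c) z
    ((1 - z * z) / (koebe_cos_den c z * koebe_cos_den c z))%C.
Proof.
  intros Hq.
  pose proof (is_derive_Cdiv _ _ _ _ _ (is_derive_id (K := C_AbsRing) z)
                (is_derive_koebe_cos_den c z) Hq) as Hk.
  replace (1 - z * z)%C
    with (1 * koebe_cos_den c z - z * (- RtoC (2 * c) + 2 * z))%C;
    [exact Hk | unfold koebe_cos_den; ring].
Qed.

(* For c = cos t the roots of the denominator are exp(+-i t): a root x + i y
   has y = 0 or x = c, and either way lies on the unit circle. *)
Lemma koebe_cos_den_neq0 (c : R) (z : C) :
  -1 <= c <= 1 -> Cmod z < 1 -> koebe_cos_den c z <> RtoC 0.
Proof.
  intros Hc Hz Hq.
  pose proof (Cmod_lt_1_sqr z Hz) as Hxy.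
  destruct z as [x y]; simpl in Hxy.
  pose proof (f_equal fst Hq) as Hre; pose proof (f_equal snd Hq) as Him.
  unfold koebe_cos_den in Hre, Him; simpl in Hre, Him.
  assert (Hyx : y = 0 \/ x = c).
  { destruct (Req_dec y 0) as [|Hy]; [now left | right].
    apply (Rmult_eq_reg_l y); [nra | exact Hy]. }
  destruct Hyx as [-> | ->].
  - assert (Hcx : (x - c) ^ 2 = c ^ 2 - 1) by nra.
    assert (x - c = 0) by (apply Rsqr_0_uniq; unfold Rsqr; nra).
    nra.
  - nra.
Qed.

Lemma koebe_cos_inj (c : R) (z w : C) :
  -1 <= c <= 1 -> Cmod z < 1 -> Cmod w < 1 ->
  koebe_cos c z = koebe_cos c w -> z = w.
Proof.
  intros Hc Hz Hw Hzw.
  pose proof (koebe_cos_den_neq0 c z Hc Hz) as Hqz.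
  pose proof (koebe_cos_den_neq0 c w Hc Hw) as Hqw.
  assert (Hcross : ((z - w) * (1 - z * w))%C = RtoC 0).
  { transitivity (z * koebe_cos_den c w - w * koebe_cos_den c z)%C;
      [unfold koebe_cos_den; ring |].
    unfold koebe_cos in Hzw.
    replace z with (z / koebe_cos_den c z * koebe_cos_den c z)%C at 1
      by (field; exact Hqz).
    rewrite Hzw. field. exact Hqw. }
  assert (Hzw1 : (1 - z * w)%C <> RtoC 0).
  { intros Hzw1.
    assert (Hprod : (z * w)%C = RtoC 1).
    { replace (z * w)%C with (1 - (1 - z * w))%C by ring. rewrite Hzw1. ring. }
    apply (f_equal Cmod) in Hprod. rewrite Cmod_mult, Cmod_1 in Hprod.
    pose proof (Cmod_ge_0 z). pose proof (Cmod_ge_0 w). nra. }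
  replace z with ((z - w) * (1 - z * w) / (1 - z * w) + w)%C by (field; exact Hzw1).
  rewrite Hcross. field. exact Hzw1.
Qed.

Lemma koebe_cos_univalent (c : R) :
  -1 <= c <= 1 -> univalent_on unit_disc (koebe_cos c).
Proof.
  intros Hc. split.
  - intros z Hz. eexists. apply is_derive_C_NormedModule.
    exact (is_derive_koebe_cos c z (koebe_cos_den_neq0 c z Hc Hz)).
  - intros z w. exact (koebe_cos_inj c z w Hc).
Qed.

Lemma koebe_cos_schlicht (c : R) : -1 <= c <= 1 -> schlicht (koebe_cos c).
Proof.
  intros Hc. split; [|split].
  - exact (koebe_cos_univalent c Hc).
  - unfold koebe_cos, Cdiv. ring.
  - apply is_derive_C_NormedModule.
    assert (Hq0 : koebe_cos_den c (RtoC 0) = RtoC 1) by (unfold koebe_cos_den; ring).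
    pose proof (is_derive_koebe_cos c (RtoC 0)) as Hk.
    assert (H1 : ((1 - RtoC 0 * RtoC 0) / (RtoC 1 * RtoC 1))%C = RtoC 1) by field.
    rewrite Hq0, H1 in Hk.
    apply Hk, RtoC_neq0, R1_neq_R0.
Qed.

Definition H_cos (s1 a : R) : R := 1 + 27 * a ^ 2 * (a - s1) / (2 * s1 ^ 3).

(* An identity on all of C: at the two poles both sides are 0, because
   Coquelicot's [/ 0] is [0]. *)
Lemma H_eq_koebe_cos (s1 a : R) :
  s1 <> 0 -> H s1 a = (fun z => koebe_cos (H_cos s1 a) z * RtoC (beta1 a s1))%C.
Proof.
  intros Hs1. apply functional_extensionality. intros z.
  assert (Hs3 : - s1 ^ 3 <> 0) by (apply Ropp_neq_0_compat, pow_nonzero, Hs1).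
  assert (Hden : (RtoC (27 * a ^ 3) * z - RtoC (27 * a ^ 2 * s1) * z
                  - (z - RtoC 1) * (z - RtoC 1) * RtoC (s1 ^ 3))%C
                 = (RtoC (- s1 ^ 3) * koebe_cos_den (H_cos s1 a) z)%C).
  { unfold koebe_cos_den, H_cos.
    apply injective_projections; simpl; field; exact Hs1. }
  assert (Hbeta : RtoC (beta1 a s1)
                  = (RtoC (27 * a ^ 2 * (2 * s1 - 3 * a)) / RtoC (- s1 ^ 3))%C).
  { rewrite <- RtoC_div by exact Hs3. f_equal. unfold beta1. field. exact Hs1. }
  unfold H, koebe_cos. rewrite Hden, Hbeta. unfold Cdiv.
  rewrite Cinv_mult_RtoC by exact Hs3. ring.
Qed.

Lemma F_eq_koebe_cos (s1 a : R) :
  s1 <> 0 -> beta1 a s1 <> 0 -> F s1 a = koebe_cos (H_cos s1 a).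
Proof.
  intros Hs1 Hbeta. apply functional_extensionality. intros z.
  unfold F. rewrite (H_eq_koebe_cos s1 a Hs1).
  field. exact (RtoC_neq0 _ Hbeta).
Qed.

Lemma H_cos_bounds (s1 a : R) :
  0 < s1 -> - s1 / 3 <= a <= s1 -> -1 <= H_cos s1 a <= 1.
Proof.
  intros Hs1 Ha. unfold H_cos.
  assert (Hs3 : 0 < 2 * s1 ^ 3) by (pose proof (pow_lt s1 3 Hs1); lra).
  assert (Hlow : 0 <= 4 * s1 ^ 3 + 27 * a ^ 2 * (a - s1)).
  { replace (4 * s1 ^ 3 + 27 * a ^ 2 * (a - s1))
      with ((3 * a + s1) * ((3 * a - 2 * s1) * (3 * a - 2 * s1))) by ring.
    apply Rmult_le_pos; [lra | apply Rle_0_sqr]. }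
  assert (Hup : 27 * a ^ 2 * (a - s1) <= 0) by (pose proof (pow2_ge_0 a); nra).
  assert (Hdiv : 27 * a ^ 2 * (a - s1) / (2 * s1 ^ 3) * (2 * s1 ^ 3)
                 = 27 * a ^ 2 * (a - s1)) by (field; lra).
  split; nra.
Qed.

Lemma beta1_neq0 (a s1 : R) : a <> 0 -> s1 <> 0 -> 3 * a <> 2 * s1 -> beta1 a s1 <> 0.
Proof.
  intros Ha Hs1 Has. unfold beta1.
  assert (a ^ 2 <> 0) by (apply pow_nonzero, Ha).
  assert (s1 ^ 3 <> 0) by (apply pow_nonzero, Hs1).
  repeat apply Rmult_integral_contrapositive_currified;
    try apply Rinv_neq_0_compat; lra.
Qed.

Theorem lemma2 (mu a s1 : R) :
  0 < mu ->
  ((- (2 * mu / 9) < a < 0) \/ (0 < a < 4 * mu / 9)) ->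
  2 * mu / 3 <= s1 ->
  schlicht (F s1 a) /\ univalent_on unit_disc (H s1 a).
Proof.
  intros Hmu Ha Hs1.
  assert (Hs : 0 < s1) by lra.
  assert (Ha0 : a <> 0) by lra.
  assert (Hrange : - s1 / 3 < a < 2 * s1 / 3) by (destruct Ha; lra).
  assert (Hc : -1 <= H_cos s1 a <= 1) by (apply H_cos_bounds; lra).
  assert (Hbeta : beta1 a s1 <> 0) by (apply beta1_neq0; lra).
  split.
  - rewrite F_eq_koebe_cos by lra. exact (koebe_cos_schlicht _ Hc).
  - rewrite H_eq_koebe_cos by lra.
    exact (univalent_on_mult_const _ _ _ (RtoC_neq0 _ Hbeta) (koebe_cos_univalent _ Hc)).
Qed.
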